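(* There is a one-to-one correspondence between strict $2$-term Nijenhuis $\mathcal L_\infty$-conformal algebras and crossed modules of Nijenhuis Lie conformal algebras.
   Context: All spaces are over $\mathbb C$. A Lie conformal algebra is a $\mathbb C[\partial]$-module with a $\mathbb C$-bilinear $\lambda$-bracket satisfying $[\partial a_\lambda b]=-\lambda[a_\lambda b]$, $[a_\lambda\partial b]=(\partial+\lambda)[a_\lambda b]$, $[a_\lambda b]=-[b_{-\partial-\lambda}a]$, $[a_\lambda[b_\mu c]]=[[a_\lambda b]_{\lambda+\mu}c]+[b_\mu[a_\lambda c]]$. A Nijenhuis operator is a $\mathbb C[\partial]$-linear $\mathcal N$ with $[\mathcal N(p)_\lambda\mathcal N(q)]=\mathcal N([\mathcal N(p)_\lambda q]+[p_\lambda\mathcal N(q)]-\mathcal N([p_\lambda q]))$; a Nijenhuis Lie conformal algebra is a Lie conformal algebra with a Nijenhuis operator; morphisms are bracket-preserving $\mathbb C[\partial]$-linear maps intertwining the operators. A conformal representation $\rho:\mathcal L\otimes\mathcal M\to\mathcal M[\lambda]$ satisfies $\rho(\partial p)_\lambda=-\lambda\rho(p)_\lambda$, $\rho(p)_\lambda\partial m=(\partial+\lambda)\rho(p)_\lambda m$, $\rho(p)_\lambda\rho(q)_\mu m-\rho(q)_\mu\rho(p)_\lambda m=\rho([p_\lambda q])_{\lambda+\mu}m$; a representation of a Nijenhuis Lie conformal algebra $(\mathcal L,[\cdot_\lambda\cdot],\mathcal N)$ is $(\mathcal M,\rho,\mathcal N_{\mathcal M})$ with $\mathcal N_{\mathcal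 M}$ $\mathbb C[\partial]$-linear and $\rho(\mathcal N(p))_\lambda\mathcal N_{\mathcal M}(m)=\mathcal N_{\mathcal M}(\rho(\mathcal N(p))_\lambda m+\rho(p)_\lambda\mathcal N_{\mathcal M}(m)-\mathcal N_{\mathcal M}(\rho(p)_\lambda m))$. A crossed module of Nijenhuis Lie conformal algebras is a quadruple $(\mathcal L_{0\,\mathcal N_0},\mathcal L_{1\,\mathcal N_1},t,\rho)$: two Nijenhuis Lie conformal algebras, a morphism $t:\mathcal L_{1\,\mathcal N_1}\to\mathcal L_{0\,\mathcal N_0}$, and a conformal sesquilinear $\rho:\mathcal L_0\otimes\mathcal L_1\to\mathcal L_1[\lambda]$ making $(\mathcal L_1,\rho,\mathcal N_1)$ a representation of $\mathcal L_{0\,\mathcal N_0}$, with $t(\rho(p)_\lambda m)=[p_\lambda t(m)]_{\mathcal L_0}$ and $\rho(t(m))_\lambda n=[m_\lambda n]_{\mathcal L_1}$. A strict $2$-term Nijenhuis $\mathcal L_\infty$-conformal algebra consists of a $\mathbb C[\partial]$-linear map $d:\mathcal L_1\to\mathcal L_0$ of $\mathbb C[\partial]$-modules, conformal sesquilinear $\mathbb C$-bilinear brackets $\llbracket\cdot_\lambda\cdot\rrbracket$: $\mathcal L_0\otimes\mathcal L_0\to\mathcal L_0[\lambda]$, $\mathcal L_0\otimes\mathcal L_1\to\mathcal L_1[\lambda]$, $\mathcal L_1\otimes\mathcal L_0\to\mathcal L_1[\lambda]$ (with $\llbracket m_\lambda n\rrbracket=0$ for $m,n\in\mathcal L_1$),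 and $\mathbb C[\partial]$-linear maps $\mathcal N_0:\mathcal L_0\to\mathcal L_0$, $\mathcal N_1:\mathcal L_1\to\mathcal L_1$, such that for all $p,q,r\in\mathcal L_0$, $m,n\in\mathcal L_1$: $\llbracket p_\lambda m\rrbracket=-\llbracket m_{-\partial-\lambda}p\rrbracket$; $\llbracket p_\lambda q\rrbracket=-\llbracket q_{-\partial-\lambda}p\rrbracket$; $d\llbracket p_\lambda m\rrbracket=\llbracket p_\lambda d(m)\rrbracket$; $\llbracket d(m)_\lambda n\rrbracket=\llbracket m_\lambda d(n)\rrbracket$; $\llbracket p_\lambda\llbracket q_\mu r\rrbracket\rrbracket-\llbracket\llbracket p_\lambda q\rrbracket_{\lambda+\mu}r\rrbracket-\llbracket q_\mu\llbracket p_\lambda r\rrbracket\rrbracket=0$; $\llbracket p_\lambda\llbracket q_\mu m\rrbracket\rrbracket-\llbracket\llbracket p_\lambda q\rrbracket_{\lambda+\mu}m\rrbracket-\llbracket q_\mu\llbracket p_\lambda m\rrbracket\rrbracket=0$; $d\circ\mathcal N_1=\mathcal N_0\circ d$; $\mathcal N_0(\llbracket\mathcal N_0(p)_\lambda q\rrbracket+\llbracket p_\lambda\mathcal N_0(q)\rrbracket-\mathcal N_0\llbracket p_\lambda q\rrbracket)=\llbracket\mathcal N_0(p)_\lambda\mathcal N_0(q)\rrbracket$; $\mathcal N_1(\llbracket\mathcal N_0(p)_\lambda m\rrbracket+\llbracket p_\lambda\mathcal N_1(m)\rrbracket-\mathcal N_1\llbracket p_\lambda m\rrbracket)=\llbracket\mathcal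 N_0(p)_\lambda\mathcal N_1(m)\rrbracket$. (It is the special case $l_3=0$, $\mathcal N_2=0$ of a $2$-term $\mathcal L_\infty$-conformal algebra with homotopy Nijenhuis operator.) *)

From HB Require Import structures.
From mathcomp Require Import all_boot all_order all_algebra.
From mathcomp Require Import complex.
From mathcomp Require Import reals.
Set Implicit Arguments. Unset Strict Implicit. Unset Printing Implicit Defensive.
Import Order.TTheory GRing.Theory Num.Theory.
Local Open Scope ring_scope.

(* Conventions:
   - a C[∂]-module is a C-vector space V (lmodType F) together with a C-linear
     endomorphism dV : V -> V (the action of ∂);
   - an element of W[λ] is encoded by its coefficient sequence c : nat -> W,
     c n being the coefficient of λ^n (finitely supported);
   - a λ-bracket U ⊗ V -> W[λ] is a map b : U -> V -> nat -> W,
     [u_λ v] = \sum_n λ^n b u v n. *)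

Section Defs.
Variable F : fieldType.

Definition Clinear (V W : lmodType F) (f : V -> W) :=
  forall (c : F) (x y : V), f (c *: x + y) = c *: f x + f y.

Definition dmodule (V : lmodType F) (dV : V -> V) := Clinear dV.

Definition dlinear (V W : lmodType F) (dV : V -> V) (dW : W -> W) (f : V -> W) :=
  Clinear f /\ forall x, f (dV x) = dW (f x).

Definition br_bilinear (U V W : lmodType F) (b : U -> V -> nat -> W) :=
  (forall (c : F) (x y : U) (v : V) n, b (c *: x + y) v n = c *: b x v n + b y v n) /\
  (forall (u : U) (c : F) (x y : V) n, b u (c *: x + y) n = c *: b u x n + b u y n).

Definition br_finsupp (U V W : lmodType F) (b : U -> V -> nat -> W) :=
  forall u v, exists N, forall n, (N <= n)%N -> b u v n = 0.

Definition lam_mul (W : lmodType F) (c : nat -> W) (n : nat) : W :=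
  if n is n'.+1 then c n' else 0.

Definition sesquilinear (U V W : lmodType F) (dU : U -> U) (dV : V -> V)
  (dW : W -> W) (b : U -> V -> nat -> W) :=
  (forall u v n, b (dU u) v n = - lam_mul (b u v) n) /\
  (forall u v n, b u (dV v) n = dW (b u v n) + lam_mul (b u v) n).

(* coefficient of λ^k in  c(-∂-λ) = \sum_n (-∂-λ)^n c_n, where N bounds the
   support of c:  \sum_{n<N} (-1)^n binom(n,k) ∂^(n-k) c_n *)
Definition subst_mdl (W : lmodType F) (dW : W -> W) (c : nat -> W) (N k : nat) : W :=
  \sum_(n < N) (((-1) ^+ n * ('C(n, k))%:R) *: iter (n - k) dW (c n)).

Definition skew_rel (U V W : lmodType F) (dW : W -> W)
  (b : U -> V -> nat -> W) (b' : V -> U -> nat -> W) :=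
  forall u v N, (forall n, (N <= n)%N -> b' v u n = 0) ->
    forall k, b u v k = - subst_mdl dW (b' v u) N k.

(* Jacobi-type identity
   [p_λ [q_μ x]] = [[p_λ q]_{λ+μ} x] + [q_μ [p_λ x]],
   compared on the coefficient of λ^n μ^m. *)
Definition jacobi_gen (A X : lmodType F) (bA : A -> A -> nat -> A)
  (act : A -> X -> nat -> X) :=
  forall p q x n m,
    act p (act q x m) n =
      \sum_(j < n.+1) (('C(n - j + m, m))%:R *: act (bA p q j) x (n - j + m))
      + act q (act p x n) m.

Definition nijenhuis_gen (A X : lmodType F) (act : A -> X -> nat -> X)
  (NA : A -> A) (NX : X -> X) :=
  forall p x n,
    act (NA p) (NX x) n = NX (act (NA p) x n + act p (NX x) n - NX (act p x n)).

Definition LieConf (L : lmodType F) (dL : L -> L) (b : L -> L -> nat -> L) :=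
  [/\ dmodule dL, br_bilinear b, br_finsupp b, sesquilinear dL dL dL b
    & skew_rel dL b b /\ jacobi_gen b b].

Definition NijenhuisOp (L : lmodType F) (dL : L -> L) (b : L -> L -> nat -> L)
  (N : L -> L) :=
  dlinear dL dL N /\ nijenhuis_gen b N N.

Definition NijLieConf (L : lmodType F) (dL : L -> L) (b : L -> L -> nat -> L)
  (N : L -> L) :=
  LieConf dL b /\ NijenhuisOp dL b N.

Definition NijLieConf_morph (L M : lmodType F) (dL : L -> L) (dM : M -> M)
  (bL : L -> L -> nat -> L) (bM : M -> M -> nat -> M) (NL : L -> L) (NM : M -> M)
  (f : L -> M) :=
  [/\ dlinear dL dM f, (forall x y n, f (bL x y n) = bM (f x) (f y) n)
    & forall x, f (NL x) = NM (f x)].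

Definition ConfRep (L M : lmodType F) (dL : L -> L) (dM : M -> M)
  (bL : L -> L -> nat -> L) (rho : L -> M -> nat -> M) :=
  [/\ dmodule dM, br_bilinear rho, br_finsupp rho, sesquilinear dL dM dM rho
    & jacobi_gen bL rho].

Definition NijRep (L M : lmodType F) (dL : L -> L) (dM : M -> M)
  (bL : L -> L -> nat -> L) (NL : L -> L) (rho : L -> M -> nat -> M) (NM : M -> M) :=
  [/\ ConfRep dL dM bL rho, dlinear dM dM NM & nijenhuis_gen rho NL NM].

Definition NijCrossedModule (L0 L1 : lmodType F) (dL0 : L0 -> L0) (dL1 : L1 -> L1)
  (b0 : L0 -> L0 -> nat -> L0) (N0 : L0 -> L0)
  (b1 : L1 -> L1 -> nat -> L1) (N1 : L1 -> L1)
  (t : L1 -> L0) (rho : L0 -> L1 -> nat -> L1) :=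
  [/\ NijLieConf dL0 b0 N0, NijLieConf dL1 b1 N1,
      NijLieConf_morph dL1 dL0 b1 b0 N1 N0 t,
      NijRep dL0 dL1 b0 N0 rho N1
    & (forall p m n, t (rho p m n) = b0 p (t m) n) /\
      (forall m m' n, rho (t m) m' n = b1 m m' n)].

(* strict 2-term Nijenhuis L_oo-conformal algebra, with data
   d : L1 -> L0, brackets b0 : L0⊗L0 -> L0[λ], rho : L0⊗L1 -> L1[λ],
   rho' : L1⊗L0 -> L1[λ] (the bracket on L1⊗L1 being zero), N0, N1. *)
Definition Strict2NijLinf (L0 L1 : lmodType F) (dL0 : L0 -> L0) (dL1 : L1 -> L1)
  (d : L1 -> L0) (b0 : L0 -> L0 -> nat -> L0)
  (rho : L0 -> L1 -> nat -> L1) (rho' : L1 -> L0 -> nat -> L1)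
  (N0 : L0 -> L0) (N1 : L1 -> L1) :=
  [/\ [/\ dmodule dL0, dmodule dL1, dlinear dL1 dL0 d,
          dlinear dL0 dL0 N0 & dlinear dL1 dL1 N1],
      [/\ br_bilinear b0, br_bilinear rho & br_bilinear rho'] /\
      [/\ br_finsupp b0, br_finsupp rho & br_finsupp rho'],
      [/\ sesquilinear dL0 dL0 dL0 b0, sesquilinear dL0 dL1 dL1 rho
        & sesquilinear dL1 dL0 dL1 rho'],
      [/\ skew_rel dL1 rho rho', skew_rel dL0 b0 b0,
          (forall p m n, d (rho p m n) = b0 p (d m) n)
        & (forall m m' n, rho (d m) m' n = rho' m (d m') n)]
    & [/\ jacobi_gen b0 b0, jacobi_gen b0 rho, (forall m, d (N1 m) = N0 (d m)),
          nijenhuis_gen b0 N0 N0 & nijenhuis_gen rho N0 N1]].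

End Defs.

(* The two structures share the C[∂]-modules, d = t, the bracket on L0, the
   action rho and the Nijenhuis operators; the crossed-module bracket on L1 is
   [m_λ n] = rho(d m)_λ n, and rho' is tied to rho by skew-symmetry.  The axioms
   then correspond one to one, except that rho' must inherit bilinearity,
   polynomiality and sesquilinearity from rho, and skew-symmetry must be seen
   to be symmetric in (rho, rho').  Both follow from the substitution
   λ ↦ -∂-λ being an involution of W[λ]; on coefficients this is the identity
   Σ_n (-1)^n C(j,n) C(n,k) = (-1)^k δ_jk. *)

From HB Require Import structures.
From mathcomp Require Import all_boot all_order all_algebra.
From mathcomp Require Import complex reals boolp.
From mathcomp Require Import ring zify.
Set Implicit Arguments. Unset Strict Implicit. Unset Printing Implicit Defensive.
Import Order.TTheory GRing.Theory Num.Theory.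
Local Open Scope ring_scope.

Section ClinearTheory.
Variables (F : fieldType) (V W : lmodType F) (f : V -> W).
Hypothesis f_lin : Clinear f.

Lemma Clinear0 : f 0 = 0.
Proof.
have := f_lin 1 0 0; rewrite !scale1r !addr0 => f0D.
by apply: (addrI (f 0)); rewrite addr0 -f0D.
Qed.

Lemma ClinearD x y : f (x + y) = f x + f y.
Proof. by have := f_lin 1 x y; rewrite !scale1r. Qed.

Lemma ClinearZ c x : f (c *: x) = c *: f x.
Proof. by have := f_lin c x 0; rewrite !addr0 Clinear0 addr0. Qed.

Lemma ClinearN x : f (- x) = - f x.
Proof. by rewrite -scaleN1r ClinearZ scaleN1r. Qed.

Lemma Clinear_sum n (g : 'I_n -> V) : f (\sum_(i < n) g i) = \sum_(i < n) f (g i).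
Proof. exact: (big_morph f ClinearD Clinear0). Qed.

End ClinearTheory.

Lemma Clinear_iter (F : fieldType) (W : lmodType F) (f : W -> W) j :
  Clinear f -> Clinear (iter j f).
Proof. by move=> f_lin; elim: j => [|j IHj] c x y //=; rewrite IHj f_lin. Qed.

Lemma sum_alt_bin_bin (R : comRingType) j M k : (j < M)%N ->
  \sum_(n < M) ((-1) ^+ n * 'C(j, n)%:R * 'C(n, k)%:R : R) =
  (if j == k then (-1) ^+ k else 0).
Proof.
elim: j M k => [|j IHj] [|M] k // ltjM.
  rewrite big_ord_recl big1 => [|n _]; last by rewrite lift0 bin0n mulr0 mul0r.
  by rewrite addr0; case: k => [|k]; rewrite /= expr0 !mul1r ?bin0n ?mulr0.
move: (IHj M.+1 k (ltnW ltjM)); rewrite big_ord_recl bin0.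
under eq_bigr do rewrite lift0.
move=> IHjS.
rewrite big_ord_recl bin0.
under eq_bigr do rewrite lift0 binS natrD mulrDr mulrDl.
rewrite big_split /= addrA IHjS.
case: k => [|k] in IHjS *.
  rewrite (eq_bigr (fun i : 'I_M => - ((-1) ^+ i * 'C(j, i)%:R * 'C(i, 0)%:R))) => [|i _].
    by rewrite sumrN IHj // subrr.
  by rewrite !bin0 exprS; ring.
rewrite (eq_bigr (fun i : 'I_M => - ((-1) ^+ i * 'C(j, i)%:R * 'C(i, k.+1)%:R)
                                - (-1) ^+ i * 'C(j, i)%:R * 'C(i, k)%:R)) => [|i _].
  rewrite sumrB sumrN !IHj // eqSS addrA subrr add0r.
  by case: eqP => _; rewrite ?oppr0 // exprS mulN1r.
by rewrite binS natrD exprS; ring.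
Qed.

Definition vanishes_from (F : fieldType) (W : lmodType F) (c : nat -> W) N :=
  forall n, (N <= n)%N -> c n = 0.

Lemma vanishes_from_leq (F : fieldType) (W : lmodType F) (c : nat -> W) N M :
  (N <= M)%N -> vanishes_from c N -> vanishes_from c M.
Proof. by move=> leNM c0 n leMn; apply/c0/(leq_trans leNM). Qed.

Section Substitution.
Variables (F : fieldType) (W : lmodType F) (dW : W -> W).
Hypothesis dW_lin : Clinear dW.

Local Notation subst := (subst_mdl dW).

Let iter_lin j : Clinear (iter j dW) := Clinear_iter j dW_lin.

Lemma eq_subst_mdl c c' N k : c =1 c' -> subst c N k = subst c' N k.
Proof. by move=> eq_c; apply: eq_bigr => n _; rewrite eq_c. Qed.

Lemma subst_mdl_widen c N M k : vanishes_from c N -> (N <= M)%N ->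
  subst c M k = subst c N k.
Proof.
move=> c0 leNM; rewrite /subst_mdl.
rewrite (big_ord_widen M (fun n => ((-1) ^+ n * 'C(n, k)%:R) *: iter (n - k) dW (c n)) leNM).
rewrite [RHS]big_mkcond /=.
apply: eq_bigr => n _; case: ltnP => // /c0 ->.
by rewrite (Clinear0 (iter_lin _)) scaler0.
Qed.

Lemma subst_mdl_vanish c N : vanishes_from (subst c N) N.
Proof.
move=> k leNk; apply: big1 => n _.
by rewrite bin_small ?mulr0 ?scale0r // (leq_trans (ltn_ord n)).
Qed.

Lemma subst_mdlZ a c N k : subst (fun n => a *: c n) N k = a *: subst c N k.
Proof.
rewrite /subst_mdl scaler_sumr; apply: eq_bigr => n _.
by rewrite (ClinearZ (iter_lin _)) !scalerA mulrC.
Qed.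

Lemma subst_mdlD c e N k : subst (fun n => c n + e n) N k = subst c N k + subst e N k.
Proof.
rewrite /subst_mdl -big_split; apply: eq_bigr => n _.
by rewrite (ClinearD (iter_lin _)) scalerDr.
Qed.

Lemma subst_mdlN c N k : subst (fun n => - c n) N k = - subst c N k.
Proof.
rewrite /subst_mdl -sumrN; apply: eq_bigr => n _.
by rewrite (ClinearN (iter_lin _)) scalerN.
Qed.

Lemma subst_mdl_d c N k : subst (fun n => dW (c n)) N k = dW (subst c N k).
Proof.
rewrite /subst_mdl (Clinear_sum dW_lin); apply: eq_bigr => n _.
by rewrite (ClinearZ dW_lin) -iterSr.
Qed.

Lemma subst_mdl_lam_mul c N k :
  subst (lam_mul c) N.+1 k = - dW (subst c N k) - lam_mul (subst c N) k.
Proof.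
rewrite /subst_mdl big_ord_recl; under eq_bigr do rewrite lift0.
rewrite /= scaler0 add0r (Clinear_sum dW_lin) -sumrN.
case: k => [|k] /=.
  rewrite subr0; apply: eq_bigr => n _.
  by rewrite !bin0 !subn0 (ClinearZ dW_lin) exprS mulN1r !mulr1 scaleNr.
rewrite -sumrB; apply: eq_bigr => n _; rewrite subSS (ClinearZ dW_lin) binS.
case: (leqP k.+1 n) => lekn.
  rewrite -iterS -subSn // -!scaleNr -scalerDl; congr (_ *: _).
  by rewrite exprS natrD; ring.
rewrite bin_small // add0n mulr0n mulr0 scale0r oppr0 add0r.
by rewrite -scaleNr exprS mulN1r mulNr.
Qed.

Lemma subst_mdlK c N : vanishes_from c N -> subst (subst c N) N =1 c.
Proof.
move=> c0 k; have [ltkN|leNk] := ltnP k N; last by rewrite subst_mdl_vanish ?c0.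
have iter_term n j :
    ((-1) ^+ n * 'C(n, k)%:R) *:
      iter (n - k) dW (((-1) ^+ j * 'C(j, n)%:R) *: iter (j - n) dW (c j)) =
    ((-1) ^+ j * ((-1) ^+ n * 'C(j, n)%:R * 'C(n, k)%:R)) *: iter (j - k) dW (c j).
  rewrite (ClinearZ (iter_lin _)) scalerA -iterD.
  have [lekn|ltnk] := leqP k n; last by rewrite (bin_small ltnk) !(mulr0, mul0r) !scale0r.
  have [lenj|ltjn] := leqP n j; last by rewrite (bin_small ltjn) !(mulr0, mul0r) !scale0r.
  have -> : (n - k + (j - n) = j - k)%N by lia.
  by congr (_ *: _); ring.
have diag j : ((-1) ^+ j * (if j == k then (-1) ^+ k else 0)) *: iter (j - k) dW (c j) =
              if j == k then c j else 0.
  case: eqP => [<-|_]; rewrite ?mulr0 ?scale0r // subnn.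
  by rewrite -exprMn mulrNN mul1r expr1n scale1r.
rewrite /subst_mdl.
under eq_bigr => n _ do rewrite (Clinear_sum (iter_lin _)) scaler_sumr.
rewrite exchange_big /=.
under eq_bigr => j _ do under eq_bigr => n _ do rewrite iter_term.
under eq_bigr => j _ do
  rewrite -scaler_suml -mulr_sumr (sum_alt_bin_bin _ _ (ltn_ord j)) diag.
by rewrite -big_mkcond big_ord1_eq ltkN.
Qed.

End Substitution.

Lemma finsupp_common_bound (F : fieldType) (U V W : lmodType F) (b : U -> V -> nat -> W)
  u v u' v' : br_finsupp b ->
  exists N, vanishes_from (b u v) N /\ vanishes_from (b u' v') N.
Proof.
move=> fs; have [N1 van1] := fs u v; have [N2 van2] := fs u' v'.
exists (maxn N1 N2).
by split; [apply: vanishes_from_leq (leq_maxl _ _) van1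
          | apply: vanishes_from_leq (leq_maxr _ _) van2].
Qed.

Section SkewSymmetry.
Variables (F : fieldType) (U V W : lmodType F) (dW : W -> W).
Variables (b : U -> V -> nat -> W) (b' : V -> U -> nat -> W).
Hypothesis dW_lin : Clinear dW.
Hypothesis b_finsupp : br_finsupp b.
Hypothesis skew_b'b : skew_rel dW b' b.

Lemma skew_rel_sym : skew_rel dW b b'.
Proof.
move=> u v N Nvu k; have [M Muv] := b_finsupp u v.
have MNuv := vanishes_from_leq (leq_maxl M N) Muv.
rewrite -(subst_mdl_widen dW_lin _ Nvu (leq_maxr M N)).
rewrite (eq_subst_mdl _ _ _ (skew_b'b MNuv)) (subst_mdlN dW_lin).
by rewrite opprK (subst_mdlK dW_lin MNuv).
Qed.

Lemma skew_rel_finsupp : br_finsupp b'.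
Proof.
move=> v u; have [N Nuv] := b_finsupp u v; exists N => n leNn.
by rewrite (skew_b'b Nuv) subst_mdl_vanish ?oppr0.
Qed.

Lemma skew_rel_lin_comb a u v x y x' y' :
  (forall n, b u v n = a *: b x y n + b x' y' n) ->
  forall n, b' v u n = a *: b' y x n + b' y' x' n.
Proof.
move=> buv n; have [N [Nxy Nx'y']] := finsupp_common_bound x y x' y' b_finsupp.
have Nuv : vanishes_from (b u v) N.
  by move=> m leNm; rewrite buv Nxy ?Nx'y' // scaler0 addr0.
rewrite !(skew_b'b Nuv, skew_b'b Nxy, skew_b'b Nx'y').
by rewrite (eq_subst_mdl _ _ _ buv) (subst_mdlD dW_lin) (subst_mdlZ dW_lin) opprD scalerN.
Qed.

Lemma skew_rel_bilinear : br_bilinear b -> br_bilinear b'.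
Proof.
move=> [lin_l lin_r].
by split=> [c x y v | u c x y]; apply: skew_rel_lin_comb => n; [apply: lin_r | apply: lin_l].
Qed.

Lemma skew_rel_sesquilinear (dU : U -> U) (dV : V -> V) :
  sesquilinear dU dV dW b -> sesquilinear dV dU dW b'.
Proof.
move=> [sesq_l sesq_r]; split=> v u n; have [N Nuv] := b_finsupp u v;
  have lam_b' : lam_mul (b' v u) n = - lam_mul (subst_mdl dW (b u v) N) n
    by case: n => [|n] /=; rewrite ?oppr0 // (skew_b'b Nuv).
- have NdV : vanishes_from (b u (dV v)) N.+1.
    by move=> [|m] // leNm; rewrite sesq_r /= !Nuv ?(Clinear0 dW_lin) ?addr0 // ltnW.
  rewrite (skew_b'b NdV) (eq_subst_mdl _ _ _ (sesq_r u v)).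
  rewrite (subst_mdlD dW_lin) (subst_mdl_d dW_lin).
  rewrite (subst_mdl_lam_mul dW_lin) (subst_mdl_widen dW_lin _ Nuv (leqnSn N)).
  by rewrite lam_b' opprK addrA subrr add0r opprK.
- have NdU : vanishes_from (b (dU u) v) N.+1.
    by move=> [|m] // leNm; rewrite sesq_l /= Nuv ?oppr0.
  rewrite (skew_b'b NdU) (eq_subst_mdl _ _ _ (sesq_l u v)) (subst_mdlN dW_lin) opprK.
  by rewrite (subst_mdl_lam_mul dW_lin) (skew_b'b Nuv) (ClinearN dW_lin) lam_b'.
Qed.

End SkewSymmetry.

Section Correspondence.
Variables (F : fieldType) (L0 L1 : lmodType F) (dL0 : L0 -> L0) (dL1 : L1 -> L1).
Variables (d : L1 -> L0) (b0 : L0 -> L0 -> nat -> L0).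
Variables (rho : L0 -> L1 -> nat -> L1) (rho' : L1 -> L0 -> nat -> L1).
Variables (N0 : L0 -> L0) (N1 : L1 -> L1).

Local Notation b1 := (fun m m' => rho (d m) m').

Lemma Strict2NijLinf_NijCrossedModule :
  Strict2NijLinf dL0 dL1 d b0 rho rho' N0 N1 ->
  NijCrossedModule dL0 dL1 b0 N0 b1 N1 d rho /\ skew_rel dL1 rho' rho.
Proof.
move=> [[dL0_lin dL1_lin d_lin N0_lin N1_lin] [[b0_bil rho_bil _] [b0_fs rho_fs rho'_fs]]
  [b0_sesq rho_sesq _] [skew_rho skew_b0 d_equiv d_rho]
  [jacobi_b0 jacobi_rho dN nij_b0 nij_rho]].
have skew_rho' := skew_rel_sym dL1_lin rho'_fs skew_rho.
have b1_bil : br_bilinear b1.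
  by split=> [c x y v | u c x y] n /=; rewrite ?d_lin.1 ?rho_bil.1 ?rho_bil.2.
have b1_sesq : sesquilinear dL1 dL1 dL1 b1.
  by split=> u v n /=; rewrite ?d_lin.2 ?rho_sesq.1 ?rho_sesq.2.
have b1_skew : skew_rel dL1 b1 b1.
  by move=> u v N Nvu k /=; rewrite d_rho; apply: skew_rho'.
have b1_jacobi : jacobi_gen b1 b1.
  move=> p q x n m /=; rewrite jacobi_rho; congr (_ + _).
  by apply: eq_bigr => i _; rewrite d_equiv.
have b1_nij : nijenhuis_gen b1 N1 N1 by move=> p x n /=; rewrite dN; apply: nij_rho.
split=> //; split.
- by split; split.
- by split; split=> // u v; apply: rho_fs.
- by split=> // x y n; apply: d_equiv.
- by split.
- by split.
Qed.

Lemma NijCrossedModule_Strict2NijLinf b1 :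
  NijCrossedModule dL0 dL1 b0 N0 b1 N1 d rho -> skew_rel dL1 rho' rho ->
  Strict2NijLinf dL0 dL1 d b0 rho rho' N0 N1.
Proof.
move=> [[[dL0_lin b0_bil b0_fs b0_sesq [skew_b0 jacobi_b0]] [N0_lin nij_b0]]
  [[dL1_lin _ _ _ [skew_b1 _]] [N1_lin _]] [d_lin _ dN]
  [[_ rho_bil rho_fs rho_sesq jacobi_rho] _ nij_rho] [d_equiv d_rho]] skew_rho'.
have d_rho_rho' m m' n : rho (d m) m' n = rho' m (d m') n.
  have [N Nm'm] := rho_fs (d m') m.
  have Nb1 : vanishes_from (b1 m' m) N by move=> k leNk; rewrite -d_rho Nm'm.
  rewrite d_rho (skew_b1 _ _ _ Nb1) (skew_rho' _ _ _ Nm'm).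
  by congr (- _); apply: eq_subst_mdl => k; rewrite d_rho.
have rho'_bil := skew_rel_bilinear dL1_lin rho_fs skew_rho' rho_bil.
have rho'_fs := skew_rel_finsupp rho_fs skew_rho'.
have rho'_sesq := skew_rel_sesquilinear dL1_lin rho_fs skew_rho' rho_sesq.
have skew_rho := skew_rel_sym dL1_lin rho_fs skew_rho'.
by split; [split | split; split | split..].
Qed.

End Correspondence.

Theorem theorem4p10 (R : realType) (L0 L1 : lmodType R[i])
  (dL0 : L0 -> L0) (dL1 : L1 -> L1)
  (d : L1 -> L0) (b0 : L0 -> L0 -> nat -> L0) (b1 : L1 -> L1 -> nat -> L1)
  (rho : L0 -> L1 -> nat -> L1) (rho' : L1 -> L0 -> nat -> L1)
  (N0 : L0 -> L0) (N1 : L1 -> L1) :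
  (Strict2NijLinf dL0 dL1 d b0 rho rho' N0 N1 /\
     b1 = (fun m m' => rho (d m) m'))
  <->
  (NijCrossedModule dL0 dL1 b0 N0 b1 N1 d rho /\ skew_rel dL1 rho' rho).
Proof.
split=> [[linf ->] | [crossed skew_rho']].
  exact: Strict2NijLinf_NijCrossedModule.
split; first exact: NijCrossedModule_Strict2NijLinf crossed skew_rho'.
case: crossed => _ _ _ _ [_ d_rho].
by apply/funext => m; apply/funext => m'; apply/funext => n; rewrite d_rho.
Qed.
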